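(* Let $A$ be a finite alphabet with $|A|\ge2$. If $Z\subseteq A^+$ is a finite code of standard form and $|Z|$ is a prime number, then $Z$ is not an alt-induced code.
   Context: $A^+$ is the set of non-empty words over $A$; $|S|$ denotes cardinality. A code is a subset of $A^+$ in which every word has at most one factorization into its elements. A finite code $Z$ over $A$ is of standard form if every word of $Z$ has length at least $2$, it is not the case that all words of $Z$ begin with the same letter, and it is not the case that all words of $Z$ end with the same letter. For non-empty $X,Y\subseteq A^+$, $(X,Y)$ is an alternative code if $XY=\{xy:x\in X,y\in Y\}$ is a code and each element of $XY$ has exactly one factorization $xy$ with $x\in X,y\in Y$ (equivalently, no word admits two different similar alternative factorizations on $(X,Y)$). $Z$ is an alt-induced code if $Z=XY$ for some alternative code $(X,Y)$. *)

From mathcomp Require Import all_boot.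
Set Implicit Arguments. Unset Strict Implicit. Unset Printing Implicit Defensive.

Definition lang (A : Type) := seq A -> Prop.

Definition in_Aplus (A : Type) (L : lang A) : Prop :=
  forall w, L w -> w <> [::].

Definition is_code (A : eqType) (L : lang A) : Prop :=
  in_Aplus L /\
  forall l1 l2 : seq (seq A),
    (forall u, u \in l1 -> L u) -> (forall u, u \in l2 -> L u) ->
    flatten l1 = flatten l2 -> l1 = l2.

Definition lang_prod (A : Type) (X Y : lang A) : lang A :=
  fun w => exists x y, X x /\ Y y /\ w = x ++ y.

Definition alternative_code (A : eqType) (X Y : lang A) : Prop :=
  (exists x, X x) /\ (exists y, Y y) /\ in_Aplus X /\ in_Aplus Y /\
  is_code (lang_prod X Y) /\
  (forall x1 y1 x2 y2, X x1 -> Y y1 -> X x2 -> Y y2 ->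
     x1 ++ y1 = x2 ++ y2 -> x1 = x2 /\ y1 = y2).

Definition alt_induced (A : eqType) (Z : lang A) : Prop :=
  exists X Y : lang A, alternative_code X Y /\
    forall w, Z w <-> lang_prod X Y w.

(* A finite set of words is given as a duplicate-free list; its cardinality is
   its size. Standard form: *)
Definition standard_form (A : eqType) (Z : seq (seq A)) : Prop :=
  (forall w, w \in Z -> 2 <= size w) /\
  ~ (exists a : A, forall w, w \in Z -> ohead w = Some a) /\
  ~ (exists a : A, forall w, w \in Z -> ohead (rev w) = Some a).

(* If (X, Y) is an alternative code with XY = Z finite, the map (x, y) |-> xy
   is a bijection X * Y -> Z, so |Z| = |X| |Y|.  When |Z| is prime, X or Y is a
   single word w; since w is non-empty, every word of Z then begins (resp. ends)
   with the first (resp. last) letter of w, against standard form. *)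
From mathcomp Require Import all_boot.
From Stdlib Require Import ClassicalEpsilon.

Set Implicit Arguments.
Unset Strict Implicit.
Unset Printing Implicit Defensive.

Definition decb (P : Prop) : bool :=
  if excluded_middle_informative P then true else false.

Lemma decbP (P : Prop) : reflect P (decb P).
Proof. by rewrite /decb; case: excluded_middle_informative => h; constructor. Qed.

Section Enumeration.

Variable T : eqType.

Lemma enum_sub_pred (P : T -> Prop) (s : seq T) :
  (forall x, P x -> x \in s) -> exists2 e : seq T, uniq e & forall x, x \in e <-> P x.
Proof.
move=> Ps; exists (undup (filter (fun x => decb (P x)) s)); first exact: undup_uniq.
move=> x; rewrite mem_undup mem_filter.
by split=> [/andP[/decbP] | Px] //; rewrite Ps // andbT; apply/decbP.
Qed.

End Enumeration.

Section Factors.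

Variable A : eqType.
Implicit Types (x y z : seq A) (Z : seq (seq A)).

Definition prefixes Z := [seq take i z | z <- Z, i <- iota 0 (size z).+1].
Definition suffixes Z := [seq drop i z | z <- Z, i <- iota 0 (size z).+1].

Lemma mem_prefixes x y Z : x ++ y \in Z -> x \in prefixes Z.
Proof.
move=> xyZ; apply/allpairsPdep; exists (x ++ y), (size x).
by rewrite xyZ take_size_cat // mem_iota size_cat ltnS leq_addr.
Qed.

Lemma mem_suffixes x y Z : x ++ y \in Z -> y \in suffixes Z.
Proof.
move=> xyZ; apply/allpairsPdep; exists (x ++ y), (size x).
by rewrite xyZ drop_size_cat // mem_iota size_cat ltnS leq_addr.
Qed.

Lemma enum_lang_prod Z (X Y : lang A) :
  (exists x, X x) -> (exists y, Y y) -> (forall w, w \in Z <-> lang_prod X Y w) ->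
  exists SX SY : seq (seq A),
    [/\ uniq SX, uniq SY, forall x, x \in SX <-> X x, forall y, y \in SY <-> Y y
       & Z =i [seq x ++ y | x <- SX, y <- SY]].
Proof.
move=> [x0 Xx0] [y0 Yy0] eqZ.
have [SX uSX SXP] : exists2 SX, uniq SX & forall x, x \in SX <-> X x.
  apply: (enum_sub_pred (s := prefixes Z)) => x Xx.
  by apply/(@mem_prefixes x y0)/eqZ; exists x, y0.
have [SY uSY SYP] : exists2 SY, uniq SY & forall y, y \in SY <-> Y y.
  apply: (enum_sub_pred (s := suffixes Z)) => y Yy.
  by apply/(@mem_suffixes x0 y)/eqZ; exists x0, y.
exists SX, SY; split=> // z; apply/idP/allpairsP.
  by case/eqZ=> x [y [Xx [Yy ->]]]; exists (x, y); split=> //; [apply/SXP | apply/SYP].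
by case=> -[x y] [/= /SXP Xx /SYP Yy ->]; apply/eqZ; exists x, y.
Qed.

Lemma size_unique_factorization Z (SX SY : seq (seq A)) :
  uniq Z -> uniq SX -> uniq SY ->
  (forall x1 y1 x2 y2, x1 \in SX -> y1 \in SY -> x2 \in SX -> y2 \in SY ->
     x1 ++ y1 = x2 ++ y2 -> x1 = x2 /\ y1 = y2) ->
  Z =i [seq x ++ y | x <- SX, y <- SY] ->
  size Z = size SX * size SY.
Proof.
move=> uZ uSX uSY fact eqZ; rewrite -(size_allpairs cat); apply/perm_size/uniq_perm => //.
apply: allpairs_uniq => // -[x1 y1] [x2 y2].
move=> /allpairsP[[? ?] [/= X1 Y1 [-> ->]]] /allpairsP[[? ?] [/= X2 Y2 [-> ->]]] /=.
by move=> /fact[] // -> ->.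
Qed.

Lemma common_head_of_left_factor Z x (SY : seq (seq A)) :
  x != [::] -> {subset Z <= [seq x' ++ y | x' <- [:: x], y <- SY]} ->
  exists a, forall z, z \in Z -> ohead z = Some a.
Proof.
case: x => // a x _ sub; exists a => z /sub.
by rewrite /= cats0 => /mapP[y _ ->].
Qed.

Lemma common_last_of_right_factor Z y (SX : seq (seq A)) :
  y != [::] -> {subset Z <= [seq x ++ y' | x <- SX, y' <- [:: y]]} ->
  exists b, forall z, z \in Z -> ohead (rev z) = Some b.
Proof.
case/lastP: y => // y b _ sub; exists b => z /sub/allpairsP[[x y'] [/= _]].
by rewrite inE => /eqP -> ->; rewrite rev_cat rev_rcons.
Qed.

End Factors.

Theorem corollaryC (A : finType) (Z : seq (seq A)) :
  2 <= #|A| ->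
  uniq Z ->
  is_code (fun w => w \in Z) ->
  standard_form Z ->
  prime (size Z) ->
  ~ alt_induced (fun w => w \in Z).
Proof.
move=> _ uZ _ [_ [no_head no_last]] pZ [X [Y [[neX [neY [nX [nY [_ fact]]]]] eqZ]]].
have [SX [SY [uSX uSY SXP SYP eqZ']]] := enum_lang_prod neX neY eqZ.
have szZ : size Z = size SX * size SY.
  by apply: size_unique_factorization => // ? ? ? ? /SXP ? /SYP ? /SXP ? /SYP ?; apply: fact.
have /(primeP pZ).2 : size SX %| size Z by rewrite szZ dvdn_mulr.
case/orP=> /eqP szSX.
- case: SX szSX SXP eqZ' {uSX szZ} => [|x [|]] // _ SXP eqZ'; apply: no_head.
  have /nX/eqP nx : X x by apply/SXP; rewrite inE.
  by apply: (common_head_of_left_factor (SY := SY) nx) => z; rewrite eqZ'.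
- have szSY : size SY = 1.
    by apply/eqP; rewrite -(eqn_pmul2l (prime_gt0 pZ)) muln1 -{1}szSX -szZ.
  case: SY szSY SYP eqZ' {uSY szZ szSX} => [|y [|]] // _ SYP eqZ'; apply: no_last.
  have /nY/eqP ny : Y y by apply/SYP; rewrite inE.
  by apply: (common_last_of_right_factor (SX := SX) ny) => z; rewrite eqZ'.
Qed.
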